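(* Let $a,b\in\mathbb C$, let $p,k\ge0$ be integers and let $c_j,d_j,e_j\in\mathbb C$ for $j=0,\dots,p-1$. Then the coefficient of $x^p$ in $\widetilde{\mathcal T}_k^{a,b}\left[\left(\prod_{j=0}^{p-1}(c_jx-d_ji+e_j)\right)_i\right]$ equals $$\sum_{j=0}^{k}\frac{k!}{(k-j)!}\left(\sum_{\substack{S\sqcup T=\{0,\dots,p-1\}\\ |S|=j}}\prod_{s\in S}d_s\prod_{t\in T}c_t\right)\prod_{r=0}^{k-j-1}(a-b+j+r),$$ where the inner sum is over all ordered pairs $(S,T)$ of disjoint subsets with union $\{0,\dots,p-1\}$ and $|S|=j$ (it is empty, hence $0$, when $j>p$).
   Context: For integers $0\le i\le k$, $P_i^k(x;a,b):=\prod_{j=0}^{k-i-1}(x+j+a)\prod_{j=0}^{i-1}(x-j+b)$. For a sequence of polynomials $(a_i(x))_{i\ge0}$, $\widetilde{\mathcal T}_k^{a,b}[(a_i(x))_i]:=(-1)^k\sum_{i=0}^k(-1)^{k-i}\binom{k}{i}P_i^k(x;a,b)\,a_i(x)$. *)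

From mathcomp Require Import all_boot all_order all_algebra.
From mathcomp Require Import complex Rstruct.
Set Implicit Arguments. Unset Strict Implicit. Unset Printing Implicit Defensive.
Import GRing.Theory Num.Theory.
Local Open Scope ring_scope.

Definition C : Type := complex Rdefinitions.R.

Definition Pik (i k : nat) (a b : C) : {poly C} :=
  (\prod_(j < k - i) ('X + (j%:R + a)%:P)) *
  (\prod_(j < i) ('X + (b - j%:R)%:P)).

Definition Ttilde (k : nat) (a b : C) (s : nat -> {poly C}) : {poly C} :=
  (-1) ^+ k * \sum_(i < k.+1) ((-1) ^+ (k - i) * ('C(k, i))%:R *: (Pik i k a b * s i)).

Definition seq_prod (p : nat) (c d e : nat -> C) (i : nat) : {poly C} :=
  \prod_(j < p) ((c j) *: 'X + (e j - d j * i%:R)%:P).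

From mathcomp Require Import all_boot all_order all_algebra.
From mathcomp Require Import complex Rstruct.
From mathcomp Require Import ring zify.
Import GRing.Theory Num.Theory.
Local Open Scope ring_scope.

(* After normalising the sign, T_k is an alternating binomial sum.  Multiplying
   every a_i by a linear factor c X + e - d i splits T_k into (c X + e) T_k and
   d times the index-weighted sum, which i C(k,i) = k C(k-1,i-1) and
   P_i^k(a,b) = (X+b) P_(i-1)^(k-1)(a,b-1) turn into k (X+b) T_(k-1)(a,b-1).
   Hence by induction on p the transform of a product of p linear factors has
   degree at most p, and its top coefficient obeys the recursion
   t(p+1,k) = c_p t(p,k) + k d_p t(p,k-1) satisfied by the right-hand side,
   written with the coefficients of prod_t (d_t X + c_t).  For p = 0 the
   Pascal recursion in k shows T_k[1] = prod_r (a - b + r). *)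

Section LinearProduct.
Context {R : comNzRingType}.

Definition linear_prod (p : nat) (c d : nat -> R) : {poly R} :=
  \prod_(t < p) ((d t)%:P * 'X + (c t)%:P).

Lemma coef_linear_prod p c d j :
  (linear_prod p c d)`_j =
  \sum_(S : {set 'I_p} | #|S| == j) (\prod_(s in S) d s) * (\prod_(t in ~: S) c t).
Proof.
rewrite /linear_prod bigA_distr coef_sum.
rewrite [RHS]big_mkcond; apply: eq_bigr => S _ /=.
rewrite big_if /= big_split /= prodr_const -!rmorph_prod /=.
rewrite mulrC mulrA -rmorphM /= coefCM coefXn eq_sym.
under [X in _ = if _ then _ * X else _]eq_bigl do rewrite in_setC.
by case: ifP; rewrite ?mulr1 ?mulr0 // mulrC.
Qed.

Lemma coef_linear_prod0 c d j : (linear_prod 0 c d)`_j = (j == 0)%:R.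
Proof. by rewrite /linear_prod big_ord0 coef1. Qed.

Lemma coef_linear_prodS p c d j :
  (linear_prod p.+1 c d)`_j =
  (linear_prod p c d)`_j * c p + (if j is j'.+1 then (linear_prod p c d)`_j' * d p else 0).
Proof.
rewrite /linear_prod big_ord_recr /= mulrDr coefD coefMC mulrA coefMX coefMC.
by case: j => [|j] /=; rewrite ?addr0 ?add0r // addrC.
Qed.

Definition top_coef_formula p (c d : nat -> R) k (u : R) : R :=
  \sum_(j < k.+1)
    ((k ^_ j)%N%:R * (linear_prod p c d)`_j * \prod_(r < k - j) (u + j%:R + r%:R)).

Lemma top_coef_formula0 c d k u :
  top_coef_formula 0 c d k u = \prod_(r < k) (u + r%:R).
Proof.
rewrite /top_coef_formula big_ord_recl [X in _ + X]big1 => [|j _]; last first.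
  by rewrite coef_linear_prod0 mulr0 mul0r.
by rewrite coef_linear_prod0 ffactn0 subn0 !mul1r addr0; under eq_bigr do rewrite addr0.
Qed.

Lemma top_coef_formulaS p c d k u :
  top_coef_formula p.+1 c d k u =
  c p * top_coef_formula p c d k u + d p * k%:R * top_coef_formula p c d k.-1 (u + 1).
Proof.
case: k => [|k].
  by rewrite /top_coef_formula !big_ord1 coef_linear_prodS mulr0 addr0; ring.
rewrite /top_coef_formula !mulr_sumr.
under eq_bigr do rewrite coef_linear_prodS mulrDr mulrDl.
rewrite big_split /=; congr (_ + _); first by apply: eq_bigr => j _; ring.
rewrite big_ord_recl /= mulr0 mul0r add0r.
apply: eq_bigr => j _; rewrite /bump /= ffactSS natrM subSS.
under [in LHS]eq_bigr do rewrite natrD (addrC 1) addrA (addrAC u).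
ring.
Qed.

End LinearProduct.

Definition Tsum (k : nat) (a b : C) (s : nat -> {poly C}) : {poly C} :=
  \sum_(i < k.+1) (((-1) ^+ i * ('C(k, i))%:R) *: (Pik i k a b * s i)).

Lemma Ttilde_Tsum k a b s : Ttilde k a b s = Tsum k a b s.
Proof.
rewrite /Ttilde /Tsum mulr_sumr; apply: eq_bigr => i _.
have -> : (-1) ^+ k = ((-1) ^+ k)%:P :> {poly C} by rewrite rmorphXn rmorphN1.
rewrite mul_polyC scalerA mulrA -exprD.
have -> : (k + (k - i) = i + (k - i).*2)%N by have := ltn_ord i; lia.
by rewrite exprD -mul2n exprM sqrrN !expr1n mulr1.
Qed.

Lemma eq_Tsum k a b {s t : nat -> {poly C}} : s =1 t -> Tsum k a b s = Tsum k a b t.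
Proof. by move=> st; apply: eq_bigr => i _; rewrite st. Qed.

Lemma PikSS i k a b : Pik i.+1 k.+1 a b = ('X + b%:P) * Pik i k a (b - 1).
Proof.
rewrite /Pik subSS big_ord_recl /= subr0 mulrCA; congr (_ * (_ * _)).
by apply: eq_bigr => j _; rewrite mulrS opprD addrA.
Qed.

Lemma PikS a b {i k : nat} : (i <= k)%N -> Pik i k.+1 a b = ('X + a%:P) * Pik i k (a + 1) b.
Proof.
move=> le_ik; rewrite /Pik subSn // big_ord_recl /= add0r -mulrA; congr (_ * (_ * _)).
by apply: eq_bigr => j _; rewrite mulrS; congr (_ + _%:P); ring.
Qed.

Lemma Tsum_index_weighted k a b (s : nat -> {poly C}) :
  \sum_(i < k.+1) (((-1) ^+ i * ('C(k, i))%:R * i%:R) *: (Pik i k a b * s i)) =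
  - (k%:R *: (('X + b%:P) * Tsum k.-1 a (b - 1) (fun i => s i.+1))).
Proof.
case: k => [|k]; first by rewrite big_ord1 !mulr0 !scale0r oppr0.
rewrite big_ord_recl mulr0 scale0r add0r mulr_sumr scaler_sumr -sumrN.
apply: eq_bigr => i _; rewrite /= PikSS -mulrA -scalerAr scalerA -scaleNr.
have -> : bump 0 i = i.+1 by [].
congr (_ *: _); last by rewrite -mulrA.
rewrite -natrM mulnC -mul_bin_diag natrM exprS; ring.
Qed.

Lemma Tsum_compl_weighted k a b (s : nat -> {poly C}) :
  \sum_(i < k.+1) (((-1) ^+ i * ('C(k, i))%:R * (k - i)%:R) *: (Pik i k a b * s i)) =
  k%:R *: (('X + a%:P) * Tsum k.-1 (a + 1) b s).
Proof.
case: k => [|k]; first by rewrite big_ord1 !mulr0 !scale0r.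
rewrite big_ord_recr /= subnn mulr0 scale0r addr0 mulr_sumr scaler_sumr.
apply: eq_bigr => i _; rewrite /= (PikS a b (ltn_ord i : (i <= k)%N)) -mulrA -scalerAr scalerA.
congr (_ *: _); last by rewrite -mulrA.
rewrite -natrM mulnC -mul_bin_down natrM; ring.
Qed.

(* Pascal's rule: the weights i and k + 1 - i of the two sums above add up to k + 1. *)
Lemma TsumS k a b (s : nat -> {poly C}) :
  Tsum k.+1 a b s =
  ('X + a%:P) * Tsum k (a + 1) b s - ('X + b%:P) * Tsum k a (b - 1) (fun i => s i.+1).
Proof.
have k1_neq0 : (k.+1)%:R != 0 :> C by rewrite pnatr_eq0.
apply: (scalerI k1_neq0).
rewrite scalerBr -(Tsum_compl_weighted k.+1) -[X in _ - X]opprK.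
rewrite -(Tsum_index_weighted k.+1) opprK -big_split /=.
rewrite /Tsum scaler_sumr; apply: eq_bigr => i _.
by rewrite scalerA -scalerDl -mulrDr -natrD subnK ?(mulrC k.+1%:R) // -ltnS ltn_ord.
Qed.

Lemma Tsum1 k a b : Tsum k a b (fun=> 1) = (\prod_(r < k) (a - b + r%:R))%:P.
Proof.
elim: k a b => [|k IH] a b.
  by rewrite /Tsum big_ord1 /Pik !big_ord0 !mulr1 scale1r polyC1.
rewrite TsumS !IH big_ord_recl addr0.
have -> : a + 1 - b = a - b + 1 by ring.
have -> : a - (b - 1) = a - b + 1 by ring.
have -> : \prod_(r < k) (a - b + 1 + r%:R) = \prod_(r < k) (a - b + (bump 0 r)%:R).
  by apply: eq_bigr => r _; rewrite /bump /= mulrS; ring.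
rewrite rmorphM rmorphB /=; ring.
Qed.

Lemma seq_prod0 c d e : seq_prod 0 c d e =1 (fun=> 1).
Proof. by move=> i; rewrite /seq_prod big_ord0. Qed.

Lemma seq_prod_shift p c d e i :
  seq_prod p c d e i.+1 = seq_prod p c d (fun j => e j - d j) i.
Proof. by apply: eq_bigr => j _; rewrite mulrS; congr (_ + _%:P); ring. Qed.

Lemma Tsum_seq_prodS k a b p c d e :
  Tsum k a b (seq_prod p.+1 c d e) =
  (c p *: 'X + (e p)%:P) * Tsum k a b (seq_prod p c d e)
  + (d p * k%:R) *: (('X + b%:P) * Tsum k.-1 a (b - 1) (seq_prod p c d (fun j => e j - d j))).
Proof.
have -> : Tsum k a b (seq_prod p.+1 c d e) =
    (c p *: 'X + (e p)%:P) * Tsum k a b (seq_prod p c d e) - d p *: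
    \sum_(i < k.+1) (((-1) ^+ i * 'C(k, i)%:R * i%:R) *: (Pik i k a b * seq_prod p c d e i)).
  rewrite mulr_sumr scaler_sumr -sumrB; apply: eq_bigr => i _.
  rewrite /seq_prod big_ord_recr -!mul_polyC !rmorphM rmorphB /= !rmorphM /=; ring.
rewrite Tsum_index_weighted scalerN opprK scalerA.
by congr (_ + _ *: (_ * _)); apply: eq_Tsum => i; rewrite seq_prod_shift.
Qed.

Lemma size_mul_linear (u v : C) (q : {poly C}) n :
  (size q <= n.+1)%N -> (size ((u *: 'X + v%:P) * q)%R <= n.+2)%N.
Proof.
move=> size_q; apply: leq_trans (size_polyMleq _ _) _.
suff size_lin : (size (u *: 'X + v%:P)%R <= 2)%N.
  by rewrite -subn1 leq_subLR; apply: leq_trans (leq_add size_lin size_q) _.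
apply: leq_trans (size_polyD _ _) _; rewrite geq_max (leq_trans (size_polyC_leq1 _)) // andbT.
by apply: leq_trans (size_scale_leq _ _) _; rewrite size_polyX.
Qed.

Lemma size_Tsum_seq_prod p c d k a b e :
  (size (Tsum k a b (seq_prod p c d e)) <= p.+1)%N.
Proof.
elim: p k a b e => [|p IH] k a b e.
  by rewrite (eq_Tsum _ _ _ (seq_prod0 c d e)) Tsum1 size_polyC_leq1.
rewrite Tsum_seq_prodS; apply: leq_trans (size_polyD _ _) _.
rewrite geq_max size_mul_linear //=.
apply: leq_trans (size_scale_leq _ _) _.
by rewrite -(scale1r 'X) size_mul_linear ?IH.
Qed.

Lemma coef_Tsum_seq_prod p c d k a b e :
  (Tsum k a b (seq_prod p c d e))`_p = top_coef_formula p c d k (a - b).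
Proof.
elim: p k a b e => [|p IH] k a b e.
  by rewrite (eq_Tsum _ _ _ (seq_prod0 c d e)) Tsum1 coefC top_coef_formula0.
have vanish k' a' b' e' : (Tsum k' a' b' (seq_prod p c d e'))`_p.+1 = 0.
  by apply: nth_default; apply: size_Tsum_seq_prod.
rewrite Tsum_seq_prodS coefD coefZ !mulrDl -!scalerAl !coefD !coefZ !coefXM !coefCM /=.
rewrite !vanish !IH !mulr0 !addr0 top_coef_formulaS.
have -> : a - (b - 1) = a - b + 1 by ring.
by rewrite -mulrA.
Qed.

Theorem corollary3 (a b : C) (p k : nat) (c d e : nat -> C) :
  (Ttilde k a b (seq_prod p c d e))`_p =
  \sum_(j < k.+1)
     ((k ^_ j)%N%:R *
      (\sum_(S : {set 'I_p} | #|S| == j)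
          (\prod_(s in S) d s) * (\prod_(t in ~: S) c t)) *
      \prod_(r < k - j) (a - b + j%:R + r%:R)).
Proof.
rewrite Ttilde_Tsum coef_Tsum_seq_prod; apply: eq_bigr => j _.
by rewrite coef_linear_prod.
Qed.
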